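(* Let $\mathcal{A}$ be a monotone allocation rule for a combinatorial auction problem, let $\mathbf{t}$ be the true type profile, and let $(A_1,\dots,A_n)$ be a feasible allocation maximizing $\sum_i t_i(A_i)$. Let $D=(\mathbf{d}^1,\dots,\mathbf{d}^T)$ be a sequence of profiles of single-minded declarations submitted to the mechanism $\mathcal{M}_{\mathcal{A}}$. If agent $i$ minimizes external regret in $D$, then $$\frac1T\sum_{t=1}^T\Big(t_i(\mathcal{A}_i(\mathbf{d}^t))+\theta_i^{\mathcal{A}}(A_i,\mathbf{d}^t_{-i})\Big)\ \ge\ t_i(A_i)-o(1),$$ where $o(1)\to 0$ as $T\to\infty$.
   Context: There is a set $M$ of $m$ items and $n$ agents; the problem specifies which allocation profiles $(X_1,\dots,X_n)$ are feasible. Agent $i$ has a private monotone valuation $t_i:2^M\to\mathbb{R}_{\ge0}$ with $t_i(\emptyset)=0$. A single-minded declaration $(S,x)$ assigns value $x$ to supersets of $S$ and $0$ otherwise. An allocation rule $\mathcal{A}$ maps declaration profiles to feasible allocations, $\mathcal{A}_i(\mathbf{d})$ being agent $i$'s set. Monotone: if agent $i$ wins $S$ by declaring value $v$ for it, he also wins any subset of $S$ declared at any value at least $v$. Critical price: $\theta_i^{\mathcal{A}}(S,\mathbf{d}_{-i})=\inf\{v:\exists d_i,\ d_i(S)=v,\ \mathcal{A}_i(d_i,\mathbf{d}_{-i})=S\}$. Mechanism $\mathcal{M}_{\mathcal{A}}$: replace each declaration $d_i$ by $(S_i,d_i(S_i))$ with $S_i\in\arg\max_S d_i(S)$ (ties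 to smaller sets), run $\mathcal{A}$, and charge each winner the critical price of his set (losers pay $0$). Utility $u_i(\mathbf{d})$ = true value of received set minus payment. Agent $i$ minimizes external regret in $D$ if for every fixed declaration $d$, $\sum_t u_i(d_i^t,\mathbf{d}_{-i}^t)\ge \sum_t u_i(d,\mathbf{d}^t_{-i})-o(T)$. *)

From HB Require Import structures.
From mathcomp Require Import all_boot all_order all_algebra.
From mathcomp Require Import all_classical all_reals.
From mathcomp Require Import ereal topology normedtype sequences.
Set Implicit Arguments. Unset Strict Implicit. Unset Printing Implicit Defensive.
Import Order.TTheory GRing.Theory Num.Theory numFieldNormedType.Exports.
Local Open Scope classical_set_scope.
Local Open Scope ring_scope.

Section Auction.
Variables (R : realType) (M : finType) (n : nat).

(* A single-minded declaration (S, x): value x for supersets of S, 0 otherwise. *)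
Definition decl := ({set M} * R)%type.
Definition profile := 'I_n -> decl.
Definition allocation := 'I_n -> {set M}.

Definition sm_val (d : decl) (T : {set M}) : R := if d.1 \subset T then d.2 else 0.

Definition valid_decl (d : decl) : Prop := 0 <= d.2.
Definition valid_profile (dp : profile) : Prop := forall j, valid_decl (dp j).

Definition upd (dp : profile) (i : 'I_n) (d : decl) : profile :=
  fun j => if j == i then d else dp j.

Definition allocation_rule (feasible : allocation -> Prop)
  (A : profile -> allocation) : Prop :=
  forall dp, valid_profile dp ->
    feasible (A dp) /\ forall j, A dp j = (dp j).1 \/ A dp j = finset.set0.

Definition monotone (A : profile -> allocation) : Prop :=
  forall (dp : profile) (i : 'I_n) (S S' : {set M}) (v v' : R),
    valid_profile dp -> S' \subset S -> v <= v' ->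
    dp i = (S, v) -> A dp i = S -> A (upd dp i (S', v')) i = S'.

(* Critical price theta_i^A(S, d_{-i}) (extended real: +oo if S is never won). *)
Definition crit (A : profile -> allocation) (i : 'I_n) (S : {set M}) (dp : profile)
  : \bar R :=
  ereal_inf [set (sm_val d S)%:E | d in [set d : decl | valid_decl d /\
                                               A (upd dp i d) i = S]].

Definition payment (A : profile -> allocation) (i : 'I_n) (dp : profile) : R :=
  if A dp i == finset.set0 then 0 else fine (crit A i (A dp i) dp).

Definition utility (tv : 'I_n -> {set M} -> R) (A : profile -> allocation)
  (i : 'I_n) (dp : profile) : R :=
  tv i (A dp i) - payment A i dp.

Definition valuation (v : {set M} -> R) : Prop :=
  v finset.set0 = 0 /\ (forall S : {set M}, 0 <= v S) /\ (forall S T : {set M}, S \subset T -> v S <= v T).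

Definition no_external_regret (tv : 'I_n -> {set M} -> R) (A : profile -> allocation)
  (i : 'I_n) (D : nat -> profile) : Prop :=
  forall d : decl, valid_decl d ->
    exists r : nat -> R, ((fun T : nat => r T / T%:R) @ \oo --> (0 : R)) /\
      forall T : nat,
        \sum_(t < T) utility tv A i (D t) >=
        \sum_(t < T) utility tv A i (upd (D t) i d) - r T.

End Auction.

From HB Require Import structures.
From mathcomp Require Import all_boot all_order all_algebra.
From mathcomp Require Import all_classical all_reals.
From mathcomp Require Import ereal topology normedtype sequences.
From mathcomp Require Import lra.
Import Order.TTheory GRing.Theory Num.Theory numFieldNormedType.Exports.
Local Open Scope classical_set_scope.
Local Open Scope ring_scope.

(* Fix the deviation d = (A_i, t_i(A_i)) in which agent i bids truthfully for
   his optimal bundle.  In every round, either d wins A_i and yields utility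
   t_i(A_i) - theta_i(A_i), or it loses, and then by monotonicity every
   winning bid for A_i is worth at least t_i(A_i), i.e. theta_i(A_i) >= t_i(A_i).
   Hence u_i(d, d_{-i}) + theta_i(A_i, d_{-i}) >= t_i(A_i), while
   u_i(d^t) <= t_i(A_i(d^t)) since payments are nonnegative.  Summing over the
   rounds and using the no-regret guarantee against d gives the bound with
   error r(T)/T = o(1). *)

Section Auction.
Local Set Implicit Arguments.
Variables (R : realType) (M : finType) (n : nat).
Implicit Types (dp : profile R M n) (d : decl R M) (S : {set M}).

Lemma upd_upd dp i d d' : upd (upd dp i d) i d' = upd dp i d'.
Proof. by apply: funext => j; rewrite /upd; case: eqP. Qed.

Lemma upd_eq dp i d : upd dp i d i = d.
Proof. by rewrite /upd eqxx. Qed.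

Lemma valid_upd dp i d :
  valid_profile dp -> valid_decl d -> valid_profile (upd dp i d).
Proof. by move=> vdp vd j; rewrite /upd; case: eqP. Qed.

Variable A : profile R M n -> allocation M n.

Lemma crit_upd dp i d S : crit A i S (upd dp i d) = crit A i S dp.
Proof.
rewrite /crit; congr ereal_inf; congr image; apply: funext => d' /=.
by rewrite upd_upd.
Qed.

Lemma crit_ge0 dp i S : (0 <= crit A i S dp)%E.
Proof.
apply/ereal_infP => _ [d [vd _] <-]; rewrite lee_fin /sm_val.
by case: ifP.
Qed.

Lemma payment_ge0 dp i : 0 <= payment A i dp.
Proof. by rewrite /payment; case: ifP => // _; apply/fine_ge0/crit_ge0. Qed.

Lemma utility_le_value tv dp i : utility tv A i dp <= tv i (A dp i).
Proof. by rewrite /utility lerBlDr lerDl payment_ge0. Qed.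

Lemma crit_le_winning_bid dp i S v :
  0 <= v -> A (upd dp i (S, v)) i = S -> (crit A i S dp <= v%:E)%E.
Proof.
move=> v_ge0 win; apply: ereal_inf_lbound; exists (S, v) => //.
by rewrite /sm_val subxx.
Qed.

Variable feasible : allocation M n -> Prop.
Hypotheses (A_rule : allocation_rule feasible A) (A_mono : monotone A).

(* A cheaper winning bid for S would, by monotonicity, make the bid (S, v) win. *)
Lemma losing_bid_le_crit dp i S v :
  valid_profile dp -> S != finset.set0 -> A (upd dp i (S, v)) i != S ->
  (v%:E <= crit A i S dp)%E.
Proof.
move=> vdp S_neq0 lose; rewrite leNgt; apply/negP.
move=> /ereal_inf_lt [_ [d [vd win] <-]].
have [_ /(_ i)] := A_rule (valid_upd i vdp vd).
rewrite upd_eq win => -[dS|S0]; last by rewrite S0 eqxx in S_neq0.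
rewrite /sm_val -dS subxx lte_fin => d_lt_v.
have d_eq : upd dp i d i = (S, d.2) by rewrite upd_eq dS -surjective_pairing.
have := @A_mono (upd dp i d) i S S d.2 v (valid_upd i vdp vd) (subxx S)
  (ltW d_lt_v) d_eq win.
by rewrite upd_upd => winS; rewrite winS eqxx in lose.
Qed.

Variable tv : 'I_n -> {set M} -> R.

Lemma value_le_truthful_utility_add_crit dp i S :
  valuation (tv i) -> valid_profile dp ->
  ((tv i S)%:E <= (utility tv A i (upd dp i (S, tv i S)))%:E + crit A i S dp)%E.
Proof.
move=> [tv0 [tv_ge0 _]] vdp.
have vd : valid_decl (S, tv i S) by exact: tv_ge0.
have [_ /(_ i)] := A_rule (valid_upd i vdp vd); rewrite upd_eq /= => -[win|lose].
- have crit_le := crit_le_winning_bid (tv_ge0 S) win.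
  have crit_fin : crit A i S dp \is a fin_num.
    by rewrite ge0_fin_numE ?crit_ge0 // (le_lt_trans crit_le) ?ltry.
  have [S0|S_neq0] := eqVneq S finset.set0.
    by rewrite /utility /payment win S0 eqxx subr0 tv0 add0e crit_ge0.
  rewrite /utility /payment win (negbTE S_neq0) crit_upd.
  by rewrite -{2}(fineK crit_fin) -EFinD subrK.
- rewrite /utility /payment lose eqxx subr0 tv0 add0e.
  have [S0|S_neq0] := eqVneq S finset.set0; first by rewrite S0 tv0 crit_ge0.
  by apply: losing_bid_le_crit; rewrite // lose eq_sym.
Qed.

Lemma value_add_regret_le_value_add_crit dp i S :
  valuation (tv i) -> valid_profile dp ->
  ((tv i S + utility tv A i dp - utility tv A i (upd dp i (S, tv i S)))%:E
     <= (tv i (A dp i))%:E + crit A i S dp)%E.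
Proof.
move=> tv_val vdp.
have := value_le_truthful_utility_add_crit S tv_val vdp.
have := utility_le_value tv dp i; have := crit_ge0 dp i S.
case: (crit A i S dp) => [c | | ] //= _ u_le; last by rewrite addey ?leey.
by rewrite -!EFinD !lee_fin; lra.
Qed.

End Auction.

Theorem lemma3p2 (R : realType) (M : finType) (n : nat)
  (feasible : allocation M n -> Prop) (A : profile R M n -> allocation M n)
  (tv : 'I_n -> {set M} -> R) (Aopt : allocation M n)
  (D : nat -> profile R M n) (i : 'I_n) :
  allocation_rule feasible A -> monotone A ->
  (forall j, valuation (tv j)) ->
  feasible Aopt ->
  (forall X : allocation M n, feasible X ->
     \sum_(j < n) tv j (X j) <= \sum_(j < n) tv j (Aopt j)) ->
  (forall t, valid_profile (D t)) ->
  no_external_regret tv A i D ->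
  exists eps : nat -> R, (eps @ \oo --> (0 : R)) /\
    forall T : nat, (0 < T)%N ->
      (((T%:R)^-1)%:E * (\sum_(t < T) ((tv i (A (D t) i))%:E + crit A i (Aopt i) (D t)))
        >= (tv i (Aopt i) - eps T)%:E)%E.
Proof.
move=> A_rule A_mono tv_val _ _ vD no_regret.
set S := Aopt i; set d : decl R M := (S, tv i S).
have [_ [tv_ge0 _]] := tv_val i.
have [r [r_o no_regret_d]] := no_regret d (tv_ge0 S).
exists (fun T => r T / T%:R); split => // T T_gt0.
set u := fun t => utility tv A i (D t).
set u_d := fun t => utility tv A i (upd (D t) i d).
have sum_le : ((\sum_(t < T) (tv i S + u t - u_d t))%:E <=
    \sum_(t < T) ((tv i (A (D t) i))%:E + crit A i S (D t)))%E.
  rewrite -sumEFin; apply: lee_sum => t _.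
  exact (value_add_regret_le_value_add_crit A_rule A_mono tv i S (tv_val i) (vD t)).
have sum_ge : T%:R * tv i S - r T <= \sum_(t < T) (tv i S + u t - u_d t).
  rewrite sumrB big_split sumr_const card_ord mulr_natl.
  by rewrite -addrA lerD2l; have := no_regret_d T; lra.
have T_pos : 0 < T%:R :> R by rewrite ltr0n.
apply: (le_trans (y := (T%:R^-1 * \sum_(t < T) (tv i S + u t - u_d t))%:E)).
  rewrite lee_fin ler_pdivlMl // mulrBr mulrCA mulfV ?mulr1 ?gt_eqF //.
by rewrite EFinM; apply: lee_wpmul2l; rewrite // lee_fin invr_ge0 ltW.
Qed.
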